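(* Let $\mathfrak g=\mathfrak k\oplus\mathfrak m$ be a Pauli-spanned Cartan decomposition and let $\mathfrak b=\mathrm{span}_{i\mathbb R}\{b_1,\dots,b_d\}\subseteq\mathfrak m$ with $b_1,\dots,b_d\in\tilde{\mathfrak m}$ pairwise commuting Pauli strings, all lying in the same connected component of the frustration graph of $\mathfrak g$. Suppose $2\le r\le d$ and $\tilde{\mathfrak k}^{r-1}_{1\dots r-2}$ is non-empty. Then $\tilde{\mathfrak k}^r_{1\dots r-1}$ is non-empty only if $\tilde{\mathfrak k}^{r-1,r}_{1\dots r-2}$ is non-empty.
   Context: Pauli strings on $n$ qubits are tensor products of $I,X,Y,Z$, not all identity; two Pauli strings either commute or anticommute. A Pauli-spanned Cartan decomposition is $\mathfrak g=\mathfrak k\oplus\mathfrak m\subseteq\mathfrak{su}(2^n)$ with $\mathfrak k=\mathrm{span}_{i\mathbb R}\tilde{\mathfrak k}$, $\mathfrak m=\mathrm{span}_{i\mathbb R}\tilde{\mathfrak m}$, $\mathfrak g=\mathrm{span}_{i\mathbb R}\tilde{\mathfrak g}$ with $\tilde{\mathfrak g}=\tilde{\mathfrak k}\sqcup\tilde{\mathfrak m}$ the set of all Pauli strings (up to phase) $\sigma$ with $i\sigma\in\mathfrak g$, and $[\mathfrak k,\mathfrak k]\subseteq\mathfrak k$, $[\mathfrak m,\mathfrak m]\subseteq\mathfrak k$, $[\mathfrak k,\mathfrak m]\subseteq\mathfrak m$. The frustration graph of $\mathfrak g$ has vertex set $\tilde{\mathfrak g}$, with edges between anticommuting pairs. For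 disjoint index lists, $\tilde{\mathfrak k}^{i_1i_2\dots}_{j_1j_2\dots}$ is the set of $k\in\tilde{\mathfrak k}$ anticommuting with every $b_{i_p}$ and commuting with every $b_{j_q}$ (no condition on other indices); e.g. $\tilde{\mathfrak k}^{r-1}_{1\dots r-2}$ consists of those elements commuting with $b_1,\dots,b_{r-2}$ and anticommuting with $b_{r-1}$. *)

From mathcomp Require Import all_boot.
Set Implicit Arguments. Unset Strict Implicit. Unset Printing Implicit Defensive.

(* Pauli strings on n qubits, up to phase, in the symplectic (binary) encoding:
   at qubit i, (x,z) = (false,false) is I, (true,false) is X,
   (true,true) is Y, (false,true) is Z. *)
Definition pauli (n : nat) := {ffun 'I_n -> bool * bool}.

Definition pid (n : nat) : pauli n := [ffun _ => (false, false)].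

(* two Pauli strings anticommute iff the symplectic form is odd, i.e. the
   number of qubits where both are non-identity and different is odd *)
Definition anticomm n (p q : pauli n) : bool :=
  odd #|[set i : 'I_n | ((p i).1 && (q i).2) (+) ((p i).2 && (q i).1)]|.

Definition commute_p n (p q : pauli n) : bool := ~~ anticomm p q.

Definition pmul n (p q : pauli n) : pauli n :=
  [ffun i => (((p i).1 (+) (q i).1), ((p i).2 (+) (q i).2))].

(* A Pauli-spanned Cartan decomposition g = k (+) m, given by the sets
   Kt = k~ and Mt = m~ of Pauli strings spanning k and m.  For Pauli strings
   a, b: [i a, i b] = 0 if they commute, and is a nonzero real multiple of
   i (a b) (a Pauli string up to phase) if they anticommute.  Hence, by the
   linear independence of Pauli strings, the bracket conditions on the spans
   are exactly the following closure conditions. *)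
Definition cartan_decomp n (Kt Mt : {set pauli n}) : Prop :=
  [/\ [disjoint Kt & Mt] /\ pid n \notin Kt /\ pid n \notin Mt,
      (forall a b, a \in Kt -> b \in Kt -> anticomm a b -> pmul a b \in Kt),
      (forall a b, a \in Mt -> b \in Mt -> anticomm a b -> pmul a b \in Kt) &
      (forall a b, a \in Kt -> b \in Mt -> anticomm a b -> pmul a b \in Mt)].

Definition frust_edge n (Gt : {set pauli n}) : rel (pauli n) :=
  fun p q => [&& p \in Gt, q \in Gt & anticomm p q].

Definition same_component n (Gt : {set pauli n}) (p q : pauli n) : bool :=
  connect (frust_edge Gt) p q.

(* k~^{i_1 i_2 ...}_{j_1 j_2 ...}: elements of Kt anticommuting with every
   b_{i_p} (ip in A) and commuting with every b_{j_q} (jq in C). *)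
Definition ksub n (Kt : {set pauli n}) (b : nat -> pauli n)
  (A C : seq nat) : {set pauli n} :=
  [set k in Kt | all (fun i => anticomm k (b i)) A &&
                 all (fun j => commute_p k (b j)) C].

(* Let G be the set of Pauli strings of g; by the Cartan bracket relations it
   is closed under products of anticommuting pairs.  This closure forces every
   connected component of the frustration graph to have diameter at most 2, so
   the commuting strings b_(r-1) and b_r have a common neighbour x in G.  Given
   k1 in k~^(r-1)_(1..r-2) and k2 in k~^r_(1..r-1), some y in G anticommutes
   with b_(r-1) and b_r and commutes with b_1, ..., b_(r-2): y is k1, k1 k2, x,
   or else k1 k2 b_j for a b_j anticommuting with x, which lies in G because x
   can be corrected (by b_(r-1), then b_r) into a q anticommuting with k1, k2
   and b_j, and k1 k2 b_j = ((q k1) k2) (q b_j).  If y lies in m rather than k,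
   then y b_(r-1) lies in k and has the same commutation pattern. *)

From mathcomp Require Import all_boot zify.
Set Implicit Arguments. Unset Strict Implicit. Unset Printing Implicit Defensive.

Lemma odd_card_set (T : finType) (P : pred T) :
  odd #|[set i | P i]| = \big[addb/false]_i P i.
Proof.
rewrite -sum1dep_card big_mkcond (big_morph odd oddD (erefl : odd 0 = false)).
by apply: eq_bigr => i _; case: (P i).
Qed.

Lemma odd_card_addb (T : finType) (P Q : pred T) :
  odd #|[set i | P i (+) Q i]| = odd #|[set i | P i]| (+) odd #|[set i | Q i]|.
Proof. by rewrite !odd_card_set -big_split. Qed.

Section SymplecticForm.

Variable n : nat.
Implicit Types p q s : pauli n.

Lemma anticommC p q : anticomm p q = anticomm q p.
Proof.
rewrite /anticomm; congr (odd _); apply: eq_card => i; rewrite !inE.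
by case: (p i) => [[] []]; case: (q i) => [[] []].
Qed.

Lemma anticommxx p : anticomm p p = false.
Proof.
by rewrite /anticomm eq_card0 // => i; rewrite !inE; case: (p i) => [[] []].
Qed.

Lemma anticommMl p q s : anticomm (pmul p q) s = anticomm p s (+) anticomm q s.
Proof.
rewrite /anticomm -odd_card_addb; congr (odd _); apply: eq_card => i.
rewrite !inE !ffunE /=.
by case: (p i) => [[] []]; case: (q i) => [[] []]; case: (s i) => [[] []].
Qed.

Lemma anticommMr p q s : anticomm s (pmul p q) = anticomm s p (+) anticomm s q.
Proof. by rewrite anticommC anticommMl !(anticommC s). Qed.

Lemma pmulC p q : pmul p q = pmul q p.
Proof. by apply/ffunP => i; rewrite !ffunE /= addbC [X in (_, X)]addbC. Qed.

Lemma frust_edge_sym (G : {set pauli n}) : symmetric (frust_edge G).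
Proof. by move=> p q; rewrite /frust_edge anticommC andbCA. Qed.

End SymplecticForm.

Section AnticommClosed.

Variables (n : nat) (G : {set pauli n}).
Hypothesis mulG :
  forall p q, p \in G -> q \in G -> anticomm p q -> pmul p q \in G.

Definition within2 (a v : pauli n) : bool :=
  [|| v == a, anticomm v a | [exists x in G, anticomm x a && anticomm x v]].

Lemma within2_edge a v w : within2 a v -> frust_edge G v w -> within2 a w.
Proof.
move=> a_v /and3P[vG _ vw]; have [wa|wa] := boolP (anticomm w a).
  by rewrite /within2 wa orbT.
apply/or3P; apply: Or33; apply/exists_inP; case/or3P: a_v.
- by move/eqP=> va; move: wa; rewrite -va anticommC vw.
- by move=> va; exists v; rewrite ?va.
case/exists_inP=> x xG /andP[xa xv]; have [xw|/negbTE xw] := boolP (anticomm x w).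
  by exists x; rewrite ?xa.
have [va|/negbTE va] := boolP (anticomm v a); first by exists v; rewrite ?va.
(* neither x nor v is adjacent to both a and w, but their product is *)
by exists (pmul x v); rewrite ?mulG // !anticommMl xa va xw vw.
Qed.

Lemma connect_within2 a v : connect (frust_edge G) a v -> within2 a v.
Proof.
move=> a_v; have sym := sym_connect_sym (@frust_edge_sym n G).
have cl : closed (frust_edge G) (within2 a).
  by apply: intro_closed => // x y xy; rewrite !unfold_in => /within2_edge; apply.
by have := closed_connect cl a_v; rewrite !unfold_in /within2 eqxx => <-.
Qed.

Lemma exists_anticomm_agree p s t :
  p \in G -> s \in G -> anticomm p s -> anticomm s t ->
  exists2 p', p' \in G /\ anticomm p' t &
    forall u, ~~ anticomm s u -> anticomm p' u = anticomm p u.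
Proof.
move=> pG sG ps st; have [pt|/negbTE pt] := boolP (anticomm p t); first by exists p.
exists (pmul p s); first by rewrite mulG // anticommMl pt st.
by move=> u /negbTE su; rewrite anticommMl su addbF.
Qed.

Lemma pmul3_mem_of_anticomm q k1 k2 c :
  q \in G -> k1 \in G -> k2 \in G -> c \in G ->
  anticomm q k1 -> anticomm q k2 -> anticomm q c ->
  ~~ anticomm k1 k2 -> ~~ anticomm k1 c -> ~~ anticomm k2 c ->
  pmul (pmul k1 k2) c \in G.
Proof.
move=> qG k1G k2G cG qk1 qk2 qc /negbTE k12 /negbTE k1c /negbTE k2c.
have -> : pmul (pmul k1 k2) c = pmul (pmul (pmul q k1) k2) (pmul q c).
  apply/ffunP => i; rewrite !ffunE /=.
  by case: (q i) => [[] []]; case: (k1 i) => [[] []]; case: (k2 i) => [[] []];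
    case: (c i) => [[] []].
have qk1G : pmul q k1 \in G by exact: mulG.
have qk12G : pmul (pmul q k1) k2 \in G by rewrite mulG // anticommMl qk2 k12.
have qcG : pmul q c \in G by exact: mulG.
rewrite mulG // !anticommMl !anticommMr anticommxx qc k1c k2c.
by rewrite (anticommC k1) (anticommC k2) qk1 qk2.
Qed.

Lemma pmul3_mem_of_neighbour x a a' k1 k2 c :
  x \in G -> a \in G -> a' \in G -> k1 \in G -> k2 \in G -> c \in G ->
  anticomm x a -> anticomm x a' -> anticomm x c ->
  anticomm a k1 -> anticomm a' k2 ->
  ~~ anticomm a a' -> ~~ anticomm a c -> ~~ anticomm a' c -> ~~ anticomm a' k1 ->
  ~~ anticomm k1 k2 -> ~~ anticomm k1 c -> ~~ anticomm k2 c ->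
  pmul (pmul k1 k2) c \in G.
Proof.
move=> xG aG a'G k1G k2G cG xa xa' xc ak1 a'k2 aa' ac a'c a'k1 k12 k1c k2c.
have [p [pG pk1] pE] := exists_anticomm_agree xG aG xa ak1.
have pa' : anticomm p a' by rewrite pE.
have [q [qG qk2] qE] := exists_anticomm_agree pG a'G pa' a'k2.
apply: (pmul3_mem_of_anticomm qG) => //; first by rewrite qE.
by rewrite qE ?pE.
Qed.

Lemma exists_anticomm_pair a a' k1 k2 (cs : seq (pauli n)) :
  {subset a :: a' :: cs <= G} -> {in a :: a' :: cs &, forall u v, commute_p u v} ->
  connect (frust_edge G) a a' ->
  k1 \in G -> anticomm k1 a -> all (commute_p k1) cs ->
  k2 \in G -> anticomm k2 a' -> all (commute_p k2) (a :: cs) ->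
  exists2 y, y \in G & [&& anticomm y a, anticomm y a' & all (commute_p y) cs].
Proof.
move=> sG comm a_a' k1G k1a /allP k1cs k2G k2a' /andP[/negbTE k2a /allP k2cs].
have aI : a \in a :: a' :: cs := mem_head _ _.
have a'I : a' \in a :: a' :: cs by rewrite !inE eqxx orbT.
have csI u : u \in cs -> u \in a :: a' :: cs by move=> uin; rewrite !inE uin !orbT.
have commE u v : u \in a :: a' :: cs -> v \in a :: a' :: cs -> anticomm u v = false.
  by move=> uin vin; apply/negbTE/comm.
have [k1a'|/negbTE k1a'] := boolP (anticomm k1 a').
  by exists k1; rewrite // k1a k1a'; apply/allP.
have [k12|k12] := boolP (anticomm k1 k2).
  exists (pmul k1 k2); first exact: mulG.
  rewrite !anticommMl k1a k2a k1a' k2a' /=.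
  apply/allP=> c cin.
  by rewrite /commute_p anticommMl (negbTE (k1cs c cin)) (negbTE (k2cs c cin)).
have [x xG /andP[xa xa']] : exists2 x, x \in G & anticomm x a && anticomm x a'.
  case/or3P: (connect_within2 a_a') => [/eqP a'a|a'a|/exists_inP//].
    by move: k2a; rewrite -a'a k2a'.
  by rewrite anticommC commE in a'a.
have [xcs|/allPn[c cin /negPn xc]] := boolP (all (commute_p x) cs).
  by exists x; rewrite ?xa ?xa'.
have cI := csI c cin.
exists (pmul (pmul k1 k2) c).
  apply: (pmul3_mem_of_neighbour xG (sG a aI) (sG a' a'I) k1G k2G (sG c cI))
    => //.
  - by rewrite anticommC.
  - by rewrite anticommC.
  - exact: comm.
  - exact: comm.
  - exact: comm.
  - by rewrite /commute_p anticommC k1a'.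
  - exact: k1cs.
  - exact: k2cs.
rewrite !anticommMl k1a k2a k1a' k2a' (commE c a) ?(commE c a') //=.
apply/allP=> c' c'in.
rewrite /commute_p !anticommMl (negbTE (k1cs c' c'in)) (negbTE (k2cs c' c'in)).
by rewrite commE ?csI.
Qed.

End AnticommClosed.

Section Cartan.

Variables (n : nat) (Kt Mt : {set pauli n}).
Hypothesis KM : cartan_decomp Kt Mt.

Lemma cartan_mulG p q : p \in Kt :|: Mt -> q \in Kt :|: Mt -> anticomm p q ->
  pmul p q \in Kt :|: Mt.
Proof.
have [_ mulKK mulMM mulKM] := KM.
rewrite !inE => /orP[pK|pM] /orP[qK|qM] pq.
- by rewrite mulKK.
- by rewrite mulKM ?orbT.
- by rewrite pmulC mulKM ?orbT // anticommC.
- by rewrite mulMM.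
Qed.

Lemma exists_K_anticomm y a : y \in Kt :|: Mt -> a \in Mt -> anticomm y a ->
  exists2 k, k \in Kt & forall u, ~~ anticomm a u -> anticomm k u = anticomm y u.
Proof.
have [_ _ mulMM _] := KM.
rewrite inE => /orP[yK|yM] aM ya; first by exists y.
by exists (pmul y a) => [|u /negbTE au]; rewrite ?mulMM // anticommMl au addbF.
Qed.

Lemma exists_K_anticomm_pair a a' k1 k2 (cs : seq (pauli n)) :
  {subset a :: a' :: cs <= Mt} -> {in a :: a' :: cs &, forall u v, commute_p u v} ->
  connect (frust_edge (Kt :|: Mt)) a a' ->
  k1 \in Kt -> anticomm k1 a -> all (commute_p k1) cs ->
  k2 \in Kt -> anticomm k2 a' -> all (commute_p k2) (a :: cs) ->
  exists2 k, k \in Kt & [&& anticomm k a, anticomm k a' & all (commute_p k) cs].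
Proof.
move=> sM comm a_a' k1K k1a k1cs k2K k2a' k2cs.
have KG k : k \in Kt -> k \in Kt :|: Mt by rewrite inE => ->.
have MG u : u \in a :: a' :: cs -> u \in Kt :|: Mt by move/sM; rewrite inE orbC => ->.
have [y yG /and3P[ya ya' ycs]] := exists_anticomm_pair cartan_mulG MG comm a_a'
  (KG _ k1K) k1a k1cs (KG _ k2K) k2a' k2cs.
have [k kK kE] := exists_K_anticomm yG (sM a (mem_head _ _)) ya.
have kyE : {in a :: a' :: cs, forall u, anticomm k u = anticomm y u}.
  by move=> u uI; apply/kE/comm; rewrite ?mem_head.
exists k; rewrite // !kyE ?inE ?eqxx ?orbT // ya ya' /=.
by apply/allP=> c cI; rewrite /commute_p kyE ?inE ?cI ?orbT //; apply: (allP ycs).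
Qed.

End Cartan.

Theorem lemmaC2 (n : nat) (Kt Mt : {set pauli n}) (d : nat)
  (b : nat -> pauli n) (r : nat) :
  cartan_decomp Kt Mt ->
  (forall i, 1 <= i <= d -> b i \in Mt) ->
  (forall i j, 1 <= i <= d -> 1 <= j <= d -> commute_p (b i) (b j)) ->
  (forall i j, 1 <= i <= d -> 1 <= j <= d ->
     same_component (Kt :|: Mt) (b i) (b j)) ->
  2 <= r <= d ->
  ksub Kt b [:: r.-1] (iota 1 (r - 2)) != set0 ->
  ksub Kt b [:: r] (iota 1 r.-1) != set0 ->
  ksub Kt b [:: r.-1; r] (iota 1 (r - 2)) != set0.
Proof.
move=> KM bM bcomm bconn /andP[r2 rd] /set0Pn[k1 k1S] /set0Pn[k2 k2S].
have ia : 1 <= r.-1 <= d by lia.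
have ib : 1 <= r <= d by lia.
set a := b r.-1; set a' := b r; set cs := map b (iota 1 (r - 2)).
have idx u : u \in a :: a' :: cs -> exists2 i, 1 <= i <= d & u = b i.
  rewrite !inE => /or3P[/eqP->|/eqP->|/mapP[i]]; [exists r.-1 | exists r | ] => //.
  by rewrite mem_iota => iI ->; exists i => //; lia.
have sM : {subset a :: a' :: cs <= Mt} by move=> u /idx[i iI ->]; apply: bM.
have comm : {in a :: a' :: cs &, forall u v, commute_p u v}.
  by move=> u v /idx[i iI ->] /idx[j jI ->]; apply: bcomm.
move: k1S k2S; rewrite !inE /= !andbT => /and3P[k1K k1a k1c] /and3P[k2K k2a' k2c].
have k1cs : all (commute_p k1) cs by rewrite all_map.
have k2acs : all (commute_p k2) (a :: cs).
  rewrite /= all_map; apply/andP; split; [|apply/allP=> j; rewrite mem_iota => jI];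
    apply: (allP k2c); rewrite mem_iota; lia.
have [k kK /and3P[ka ka' kcs]] :=
  exists_K_anticomm_pair KM sM comm (bconn _ _ ia ib) k1K k1a k1cs k2K k2a' k2acs.
apply/set0Pn; exists k; rewrite !inE kK /= !andbT.
by rewrite -[b r.-1]/a -[b r]/a' ka ka' -(all_map b).
Qed.
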